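(* Let $z\ge1$, $X\subset[\Delta]^d$ finite, $x\in X$ and $p\in X$ fixed, and $r=\|x-p\|_2$. Let $Q\subseteq X$ be a set of at most $k$ centers containing $p$ that is a constant-factor approximation to the optimal $(k,z)$-medoids clustering on $X$ among sets containing a center at $p$, and let $\Psi$ be a constant-factor approximation to $\mathrm{Cost}(X,Q)$. Let $S$ be an optimal $(k,z)$-medoids clustering on $X$ among sets containing a center at $p$ and no center in the interior of $B_r(x)$. Let $n_b$ be the number of points of $X$ assigned by $Q$ to centers in $B_{r/2}(x)$ and let $n_a$ be the number of points assigned by $Q$ to centers in the annulus $B_r(x)\setminus B_{r/2}(x)$. If $n_b\ge n_a$, then there exist constants $\gamma_1,\gamma_2\ge1$ such that \[\mathrm{Cost}(X,S)\le\gamma_1(\Psi+n_b\cdot r^z)\le(\gamma_1\gamma_2)\cdot\mathrm{Cost}(X,S).\]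
   Context: $\mathrm{Cost}(X,C)=\sum_{y\in X}\min_{c\in C}\|y-c\|_2^z$; a point is assigned by $Q$ to its closest center in $Q$. A $(k,z)$-medoids clustering is a set of at most $k$ centers chosen from $X$. $B_\rho(x)$ denotes the Euclidean ball of radius $\rho$ centered at $x$. ''Constant-factor approximation'' means within a multiplicative constant factor; the constants $\gamma_1,\gamma_2$ may depend on these constants and on $z$. *)

From HB Require Import structures.
From mathcomp Require Import all_boot all_order all_algebra.
From mathcomp Require Import reals exp.
Set Implicit Arguments. Unset Strict Implicit. Unset Printing Implicit Defensive.
Import Order.TTheory GRing.Theory Num.Theory.
Local Open Scope ring_scope.

(* Grid points of [Delta]^d: coordinate i of v is (val (v i)) + 1 in {1..Delta};
   the +1 offset is irrelevant for distances and is omitted. *)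
Definition grid (d Delta : nat) := {ffun 'I_d -> 'I_Delta}.

Definition dist (R : realType) (d Delta : nat) (v w : grid d Delta) : R :=
  Num.sqrt (\sum_(i < d) (((v i : nat)%:R - (w i : nat)%:R) ^+ 2)).

(* min_{c in C} ||y - c||^z for a nonempty C (the identity element of the
   min-fold is the max over C, which is attained in C, so the fold is the true
   minimum; for the empty set this gives 0, never used). *)
Definition ptcost (R : realType) (d Delta : nat) (z : R) (y : grid d Delta)
    (C : {set grid d Delta}) : R :=
  \big[Num.min/ \big[Num.max/0]_(c in C) powR (dist R y c) z]_(c in C)
     powR (dist R y c) z.

Definition Cost (R : realType) (d Delta : nat) (z : R) (X C : {set grid d Delta}) : R :=
  \sum_(y in X) ptcost z y C.

From HB Require Import structures.
From mathcomp Require Import all_boot all_order all_algebra.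
From mathcomp Require Import reals exp.
From mathcomp Require Import ring lra.
Import Order.TTheory GRing.Theory Num.Theory.
Local Open Scope ring_scope.

(* Upper bound: removing from Q its centers in the open ball B_r(x) leaves a
   set that still contains p, hence competes with S.  A point whose Q-center
   lies in that ball is rerouted to p, at distance at most its Q-distance plus
   2r, so at cost at most 2^z (dist^z + (2r)^z); as n_a <= n_b there are at
   most 2 n_b such points.
   Lower bound: a point whose Q-center lies in B_{r/2}(x) is either at distance
   >= r/4 from that center, or lies in B_{3r/4}(x) and hence at distance >= r/4
   from every center of S.  So n_b (r/4)^z <= Cost(X,Q) + Cost(X,S), which is
   at most (alpha + 1) Cost(X,S), while Psi <= alpha beta Cost(X,S). *)

Lemma cauchy_schwarz_sqr {R : realFieldType} {I : finType} (a b : I -> R) :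
  (\sum_i a i * b i) ^+ 2 <= (\sum_i a i ^+ 2) * (\sum_i b i ^+ 2).
Proof.
have lagrange_ge0 : 0 <= \sum_i \sum_j (a i * b j - a j * b i) ^+ 2.
  by apply: sumr_ge0 => i _; apply: sumr_ge0 => j _; apply: sqr_ge0.
have Eab : (\sum_i a i ^+ 2) * (\sum_i b i ^+ 2) = \sum_i \sum_j a i ^+ 2 * b j ^+ 2.
  exact: big_distrlr.
have Eba : (\sum_i a i ^+ 2) * (\sum_i b i ^+ 2) = \sum_i \sum_j a j ^+ 2 * b i ^+ 2.
  rewrite mulrC big_distrlr; apply: eq_bigr => i _.
  by apply: eq_bigr => j _; rewrite mulrC.
have Eab2 : (\sum_i a i * b i) ^+ 2 = \sum_i \sum_j (a i * b i) * (a j * b j).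
  by rewrite expr2 big_distrlr.
have lagrange : \sum_i \sum_j (a i * b j - a j * b i) ^+ 2 =
    \sum_i \sum_j a i ^+ 2 * b j ^+ 2 + \sum_i \sum_j a j ^+ 2 * b i ^+ 2
    - 2 * \sum_i \sum_j (a i * b i) * (a j * b j).
  rewrite mulr_sumr -big_split -sumrB /=; apply: eq_bigr => i _.
  by rewrite mulr_sumr -big_split -sumrB /=; apply: eq_bigr => j _; ring.
rewrite -Eab -Eba -Eab2 in lagrange; lra.
Qed.

Lemma cauchy_schwarz {R : rcfType} {I : finType} (a b : I -> R) :
  \sum_i a i * b i <= Num.sqrt (\sum_i a i ^+ 2) * Num.sqrt (\sum_i b i ^+ 2).
Proof.
have a2_ge0 : 0 <= \sum_i a i ^+ 2 by apply: sumr_ge0 => i _; apply: sqr_ge0.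
have b2_ge0 : 0 <= \sum_i b i ^+ 2 by apply: sumr_ge0 => i _; apply: sqr_ge0.
rewrite -sqrtrM // (le_trans (ler_norm _)) // -sqrtr_sqr ler_sqrt ?mulr_ge0 //.
exact: cauchy_schwarz_sqr.
Qed.

Lemma sqrt_sum_sqrD_le {R : rcfType} {I : finType} (u v : I -> R) :
  Num.sqrt (\sum_i (u i + v i) ^+ 2) <=
  Num.sqrt (\sum_i u i ^+ 2) + Num.sqrt (\sum_i v i ^+ 2).
Proof.
set su := Num.sqrt (\sum_i u i ^+ 2); set sv := Num.sqrt (\sum_i v i ^+ 2).
have su_ge0 : 0 <= su := sqrtr_ge0 _.
have sv_ge0 : 0 <= sv := sqrtr_ge0 _.
have su2 : su ^+ 2 = \sum_i u i ^+ 2.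
  by rewrite sqr_sqrtr //; apply: sumr_ge0 => i _; apply: sqr_ge0.
have sv2 : sv ^+ 2 = \sum_i v i ^+ 2.
  by rewrite sqr_sqrtr //; apply: sumr_ge0 => i _; apply: sqr_ge0.
have expand : \sum_i (u i + v i) ^+ 2 =
    \sum_i u i ^+ 2 + \sum_i v i ^+ 2 + 2 * \sum_i u i * v i.
  by rewrite mulr_sumr -!big_split /=; apply: eq_bigr => i _; ring.
have := cauchy_schwarz u v; rewrite -/su -/sv => cs.
rewrite -(ger0_norm (addr_ge0 su_ge0 sv_ge0)) -sqrtr_sqr ler_sqrt ?sqr_ge0 //.
by rewrite expand -su2 -sv2; nra.
Qed.

Section GridDistance.
Variable R : realType.
Context {d Delta : nat}.
Implicit Types v w u : grid d Delta.

Lemma dist_ge0 v w : 0 <= dist R v w.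
Proof. exact: sqrtr_ge0. Qed.

Lemma distC v w : dist R v w = dist R w v.
Proof. by rewrite /dist; congr Num.sqrt; apply: eq_bigr => i _; ring. Qed.

Lemma dist_triangle v u w : dist R v w <= dist R v u + dist R u w.
Proof.
rewrite /dist (eq_bigr (fun i => ((v i : nat)%:R - (u i : nat)%:R
                                  + ((u i : nat)%:R - (w i : nat)%:R)) ^+ 2 : R)).
  exact: sqrt_sum_sqrD_le.
by move=> i _; congr (_ ^+ 2); ring.
Qed.

End GridDistance.

Section PowR.
Context {R : realType}.
Implicit Types a b z : R.

Lemma ge0_ler_powRl {z a b} : 0 <= z -> 0 <= a -> a <= b -> a `^ z <= b `^ z.
Proof.
by move=> z0 a0 ab; apply: ge0_ler_powR; rewrite ?nnegrE ?(le_trans a0 ab).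
Qed.

Lemma powR_ge1 a z : 1 <= a -> 0 <= z -> 1 <= a `^ z.
Proof. by move=> a1 z0; rewrite -(powRr0 a) ler_powR. Qed.

Lemma powRD_le {z a b} : 0 <= z -> 0 <= a -> 0 <= b ->
  (a + b) `^ z <= 2 `^ z * (a `^ z + b `^ z).
Proof.
move=> z0 a0 b0; wlog ab : a b a0 b0 / a <= b.
  move=> le_ab; have [|/ltW] := leP a b; first exact: le_ab.
  by rewrite addrC [a `^ z + _]addrC; apply: le_ab.
have le_2b : a + b <= 2 * b by lra.
apply: le_trans (ge0_ler_powRl z0 (addr_ge0 a0 b0) le_2b) _.
by rewrite powRM // ler_wpM2l ?powR_ge0 // lerDr powR_ge0.
Qed.

End PowR.

Definition nearest (R : realType) {d Delta : nat} (C : {set grid d Delta})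
    (y c : grid d Delta) : Prop :=
  c \in C /\ forall c', c' \in C -> dist R y c <= dist R y c'.

Section PointCost.
Context {R : realType} (z : R).
Context {d Delta : nat}.
Implicit Types (y c : grid d Delta) (C X : {set grid d Delta}).

Lemma ptcost_ge0 y C : 0 <= ptcost z y C.
Proof.
rewrite /ptcost; apply: (big_ind (>= 0)) => [||c _]; last exact: powR_ge0.
- apply: (big_ind (>= 0)) => [||c _] //; last exact: powR_ge0.
  by move=> u v u0 _; rewrite le_max u0.
- by move=> u v u0 v0; rewrite le_min u0 v0.
Qed.

Lemma ptcost_le {y C c} : c \in C -> ptcost z y C <= dist R y c `^ z.
Proof. by move=> cC; rewrite /ptcost (bigD1 c) //= ge_min lexx. Qed.

Lemma ptcost_ge {y C c0 L} : c0 \in C ->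
  (forall c, c \in C -> L <= dist R y c `^ z) -> L <= ptcost z y C.
Proof.
move=> c0C L_le; rewrite /ptcost; apply: (big_ind (>= L)) => [||c /L_le //].
- by rewrite (bigD1 c0) //= le_max L_le.
- by move=> u v Lu Lv; rewrite le_min Lu Lv.
Qed.

Lemma ptcost_nearest {y C c} : 0 <= z -> nearest R C y c ->
  ptcost z y C = dist R y c `^ z.
Proof.
move=> z0 [cC c_min]; apply/le_anti; rewrite ptcost_le //=.
apply: (ptcost_ge cC) => c' c'C.
exact: ge0_ler_powRl z0 (dist_ge0 _ _ _) (c_min c' c'C).
Qed.

Lemma Cost_ge0 X C : 0 <= Cost z X C.
Proof. by apply: sumr_ge0 => y _; apply: ptcost_ge0. Qed.

Lemma Cost_nearest {X C} {sigma : grid d Delta -> grid d Delta} : 0 <= z ->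
  (forall y, y \in X -> nearest R C y (sigma y)) ->
  Cost z X C = \sum_(y in X) dist R y (sigma y) `^ z.
Proof.
by move=> z0 sigma_nearest; apply: eq_bigr => y /sigma_nearest; exact: ptcost_nearest.
Qed.

End PointCost.

Lemma card_lt_split {T : finType} {R : realDomainType} (A : {set T}) (f : T -> R)
    (m r : R) :
  (#|[set y in A | (f y < r)%R]|
   <= #|[set y in A | (f y <= m)%R]|
      + #|[set y in A | ((m < f y) && (f y <= r))%R]|)%N.
Proof.
set low := [set y in A | (f y <= m)%R].
set mid := [set y in A | ((m < f y) && (f y <= r))%R].
apply: leq_trans (leq_card_setU low mid).1.
apply/subset_leq_card/subsetP => y; rewrite !inE => /andP[yA lt_r].
by rewrite yA /=; case: leP => //= _; rewrite ltW.
Qed.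

Lemma sumr_const_cond (V : nmodType) (T : finType) (A : {pred T}) (P : pred T)
    (K : V) :
  \sum_(y in A | P y) K = K *+ #|[set y in A | P y]|.
Proof. by rewrite -sumr_const; apply: eq_bigl => y; rewrite inE. Qed.

Section NearestAssignment.
Context {R : realType} {d Delta : nat} (z : R).
Context {X Q : {set grid d Delta}} {sigma : grid d Delta -> grid d Delta}.
Variable x : grid d Delta.
Hypothesis z_ge0 : 0 <= z.
Hypothesis sigma_nearest : forall y, y \in X -> nearest R Q y (sigma y).

Section OutsideBall.
Variable p : grid d Delta.
Hypothesis pQ : p \in Q.
Let r := dist R x p.

Lemma ptcost_far_centers_le y : y \in X ->
  ptcost z y [set c in Q | r <= dist R x c] <=
  2 `^ z * dist R y (sigma y) `^ z
  + (if dist R x (sigma y) < r then (4 * r) `^ z else 0).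
Proof.
move=> yX; have [sQ _] := sigma_nearest y yX.
have r_ge0 : 0 <= r := dist_ge0 R x p.
case: ltP => [inside | outside].
- have p_far : p \in [set c in Q | r <= dist R x c] by rewrite inE pQ lexx.
  apply: le_trans (ptcost_le z p_far) _.
  have dist_yp : dist R y p <= dist R y (sigma y) + 2 * r.
    have := dist_triangle R y (sigma y) p; have := dist_triangle R (sigma y) x p.
    by rewrite (distC R (sigma y) x) -/r; lra.
  have r2_ge0 : 0 <= 2 * r by lra.
  apply: le_trans (ge0_ler_powRl z_ge0 (dist_ge0 R y p) dist_yp) _.
  apply: le_trans (powRD_le z_ge0 (dist_ge0 R y (sigma y)) r2_ge0) _.
  by rewrite mulrDr (_ : 4 * r = 2 * (2 * r)) ?powRM //; ring.
- have s_far : sigma y \in [set c in Q | r <= dist R x c] by rewrite inE sQ outside.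
  apply: le_trans (ptcost_le z s_far) _.
  by rewrite addr0 ler_peMl ?powR_ge0 ?powR_ge1 //; lra.
Qed.

Lemma Cost_far_centers_le :
  Cost z X [set c in Q | r <= dist R x c] <=
  2 `^ z * Cost z X Q
  + 4 `^ z * r `^ z * #|[set y in X | dist R x (sigma y) < r]|%:R.
Proof.
rewrite (Cost_nearest z z_ge0 sigma_nearest) mulr_sumr /Cost.
apply: le_trans (ler_sum _ ptcost_far_centers_le) _.
have -> : 4 `^ z * r `^ z = (4 * r) `^ z by rewrite powRM // dist_ge0.
by rewrite big_split /= -big_mkcondr sumr_const_cond mulr_natr.
Qed.

Lemma Cost_constrained_opt_le (k : nat) (S : {set grid d Delta}) :
  Q \subset X -> (#|Q| <= k)%N ->
  (forall C : {set grid d Delta}, C \subset X -> (#|C| <= k)%N -> p \in C ->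
     (forall c, c \in C -> r <= dist R x c) -> Cost z X S <= Cost z X C) ->
  Cost z X S <= 2 `^ z * Cost z X Q
                + 4 `^ z * r `^ z * #|[set y in X | dist R x (sigma y) < r]|%:R.
Proof.
move=> QX Qk S_opt; apply: le_trans Cost_far_centers_le.
have far_sub : [set c in Q | r <= dist R x c] \subset Q.
  by apply/subsetP => c; rewrite inE => /andP[].
apply: S_opt; first exact: subset_trans far_sub QX.
- exact: leq_trans (subset_leq_card far_sub) Qk.
- by rewrite inE pQ lexx.
- by move=> c; rewrite inE => /andP[].
Qed.

End OutsideBall.

Section InsideBall.
Variable rho : R.
Context {S : {set grid d Delta}} {s : grid d Delta}.
Hypothesis rho_ge0 : 0 <= rho.
Hypothesis sS : s \in S.
Hypothesis S_far : forall c, c \in S -> rho <= dist R x c.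

Lemma ptcost_near_centers_ge y : y \in X -> dist R x (sigma y) <= rho / 2 ->
  (rho / 4) `^ z <= ptcost z y Q + ptcost z y S.
Proof.
move=> yX near_x; rewrite (ptcost_nearest z z_ge0 (sigma_nearest y yX)).
have rho4_ge0 : 0 <= rho / 4 by rewrite divr_ge0.
have := ptcost_ge0 z y S; have := powR_ge0 (dist R y (sigma y)) z.
have [far_sigma | near_sigma] := leP (rho / 4) (dist R y (sigma y)).
  by have := ge0_ler_powRl z_ge0 rho4_ge0 far_sigma; lra.
suff : (rho / 4) `^ z <= ptcost z y S by lra.
apply: (ptcost_ge z sS) => c cS; apply: ge0_ler_powRl z_ge0 rho4_ge0 _.
have := S_far c cS; have := dist_triangle R x y c.
have := dist_triangle R x (sigma y) y; rewrite (distC R (sigma y) y); lra.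
Qed.

Lemma count_near_centers_le_Cost :
  #|[set y in X | dist R x (sigma y) <= rho / 2]|%:R * rho `^ z
  <= 4 `^ z * (Cost z X Q + Cost z X S).
Proof.
have -> : rho `^ z = 4 `^ z * (rho / 4) `^ z.
  by rewrite -powRM ?divr_ge0 // mulrC divfK ?pnatr_eq0.
rewrite mulrCA ler_wpM2l ?powR_ge0 // mulr_natl.
rewrite -sumr_const_cond big_mkcondr /Cost -big_split /=.
apply: ler_sum => y yX; case: ifP => [near_x | _].
  exact: ptcost_near_centers_ge.
by rewrite addr_ge0 ?ptcost_ge0.
Qed.

End InsideBall.
End NearestAssignment.

Theorem lemma3p9 (R : realType) (z alpha beta : R) :
  1 <= z -> 1 <= alpha -> 1 <= beta ->
  exists gamma1 gamma2 : R, 1 <= gamma1 /\ 1 <= gamma2 /\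
  forall (d Delta k : nat) (X Q S : {set grid d Delta}) (x p : grid d Delta)
         (Psi : R) (sigma : grid d Delta -> grid d Delta),
    x \in X -> p \in X ->
    (* Q: at most k centers from X, containing p, alpha-approximate among such sets *)
    Q \subset X -> (#|Q| <= k)%N -> p \in Q ->
    (forall C : {set grid d Delta}, C \subset X -> (#|C| <= k)%N -> p \in C ->
       Cost z X Q <= alpha * Cost z X C) ->
    (* Psi: beta-approximation of Cost(X,Q) *)
    Cost z X Q <= beta * Psi -> Psi <= beta * Cost z X Q ->
    (* S: optimal among sets with p and no center in the open ball of radius r *)
    S \subset X -> (#|S| <= k)%N -> p \in S ->
    (forall c, c \in S -> dist R x p <= dist R x c) ->
    (forall C : {set grid d Delta}, C \subset X -> (#|C| <= k)%N -> p \in C ->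
       (forall c, c \in C -> dist R x p <= dist R x c) ->
       Cost z X S <= Cost z X C) ->
    (* sigma: assignment of each point of X to a closest center of Q *)
    (forall y, y \in X -> sigma y \in Q /\
       (forall c, c \in Q -> dist R y (sigma y) <= dist R y c)) ->
    let r := dist R x p in
    let n_b := #|[set y in X | dist R x (sigma y) <= r / 2]| in
    let n_a := #|[set y in X | (r / 2 < dist R x (sigma y)) && (dist R x (sigma y) <= r)]| in
    (n_a <= n_b)%N ->
    Cost z X S <= gamma1 * (Psi + n_b%:R * powR r z) /\
    gamma1 * (Psi + n_b%:R * powR r z) <= (gamma1 * gamma2) * Cost z X S.
Proof.
move=> z_ge1 alpha_ge1 beta_ge1; have z_ge0 : 0 <= z by lra.
have pow2_ge1 : 1 <= 2 `^ z by rewrite powR_ge1 // ler1n.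
have pow4_ge1 : 1 <= 4 `^ z by rewrite powR_ge1 // ler1n.
exists (2 `^ z * beta + 2 * 4 `^ z), (alpha * beta + 4 `^ z * (alpha + 1)).
split; first nra; split; first nra.
move=> d Delta k X Q S x p Psi sigma _ _ QX Qk pQ Q_approx CQ_le Psi_le.
move=> SX Sk pS S_far S_opt sigma_nearest r n_b n_a na_le_nb.
have CQ_ge0 := Cost_ge0 z X Q; have CS_ge0 := Cost_ge0 z X S.
have Psi_ge0 : 0 <= Psi by nra.
have r_pow_ge0 : 0 <= 4 `^ z * r `^ z by rewrite mulr_ge0 ?powR_ge0.
have n_ba : ((n_b + n_a)%:R : R) <= 2 * n_b%:R.
  by rewrite -natrM ler_nat mul2n -addnn leq_add2l.
have upper : Cost z X S <= 2 `^ z * Cost z X Q + 4 `^ z * r `^ z * (n_b + n_a)%:R.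
  have := Cost_constrained_opt_le z x z_ge0 sigma_nearest p pQ _ _ QX Qk S_opt.
  move/le_trans; apply.
  by rewrite lerD2l ler_wpM2l // ler_nat card_lt_split.
have lower :=
  count_near_centers_le_Cost z x z_ge0 sigma_nearest r (dist_ge0 R x p) pS S_far.
split.
  have : 2 `^ z * Cost z X Q <= 2 `^ z * (beta * Psi) by rewrite ler_wpM2l ?powR_ge0.
  have : 0 <= 2 `^ z * beta * (n_b%:R * r `^ z) by rewrite !mulr_ge0 ?powR_ge0 //; lra.
  have := mulr_ge0 (powR_ge0 4 z) Psi_ge0; nra.
rewrite -mulrA; apply: ler_wpM2l; first by nra.
have QS := Q_approx S SX Sk pS.
have : beta * Cost z X Q <= beta * (alpha * Cost z X S) by rewrite ler_wpM2l //; lra.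
have : 4 `^ z * Cost z X Q <= 4 `^ z * (alpha * Cost z X S).
  by rewrite ler_wpM2l ?powR_ge0.
lra.
Qed.
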